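(* Let $S$ be a scheme on $X$, $\mathbb F$ a field, $x\in X$, $E_a^*=E_a^*(x)$, and let $R_i,R_j,R_\ell,R_m\in S$. If $R_{i'}R_\ell=\{R_j\}$, then $E_i^*A_mE_\ell^*\neq O$ if and only if $m=j$; moreover $E_i^*A_jE_\ell^*=E_i^*JE_\ell^*$. In particular, if $k_i=1$ or $k_\ell=1$, then there is a unique $R_n\in S$ with $E_i^*A_nE_\ell^*\neq O$, and $E_i^*A_nE_\ell^*=E_i^*JE_\ell^*$.
   Context: Let $X$ be a nonempty finite set. A scheme of class $d$ on $X$ is a partition $S=\{R_0,\dots,R_d\}$ of $X\times X$ into nonempty sets such that $R_0=\{(b,b):b\in X\}$; for each $c$ there is $c'$ with $R_{c'}=\{(f,e):(e,f)\in R_c\}$; and for all $i,j,k$ the intersection number $p_{ij}^k=|\{\ell\in X:(m,\ell)\in R_i,(\ell,n)\in R_j\}|$ does not depend on $(m,n)\in R_k$. The valency is $k_a=p_{aa'}^0$; the complex product is $R_aR_b=\{R_c\in S:p_{ab}^c>0\}$. For $y\in X$, $yR_a=\{z:(y,z)\in R_a\}$. $A_a\in M_X(\mathbb F)$ is the $(0,1)$ adjacency matrix of $R_a$, $E_a^*(y)$ is the diagonal $(0,1)$-matrix with ones exactly at positions indexed by $yR_a$, $J$ is the all-ones matrix and $O$ the zero matrix. *)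

From HB Require Import structures.
From mathcomp Require Import all_boot all_order all_algebra.
Set Implicit Arguments. Unset Strict Implicit. Unset Printing Implicit Defensive.
Import GRing.Theory.
Local Open Scope ring_scope.

(* A scheme of class d on a finite set X is encoded by a function
   r : X -> X -> 'I_d.+1 sending (e,f) to the index c of the unique
   relation R_c containing (e,f); so R_c = {(e,f) | r e f = c}. *)

Definition pcount (X : finType) (d : nat) (r : X -> X -> 'I_d.+1)
  (a b : 'I_d.+1) (m n : X) : nat :=
  #|[set l : X | (r m l == a) && (r l n == b)]|.

Definition is_scheme (X : finType) (d : nat) (r : X -> X -> 'I_d.+1) : Prop :=
  [/\ (exists y : X, True),
      (forall c : 'I_d.+1, exists e f, r e f = c),
      (forall e f, r e f = ord0 <-> e = f),
      (forall c : 'I_d.+1, exists c' : 'I_d.+1, forall e f, r f e = c' <-> r e f = c) &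
      (forall a b k : 'I_d.+1, forall m n m2 n2 : X,
          r m n = k -> r m2 n2 = k -> pcount r a b m n = pcount r a b m2 n2)].

Definition trans (X : finType) (d : nat) (r : X -> X -> 'I_d.+1) (c : 'I_d.+1)
  : 'I_d.+1 :=
  odflt c [pick c' : 'I_d.+1 | [forall e, forall f, (r f e == c') == (r e f == c)]].

(* intersection number p_ab^c (computed at some pair of R_c; 0 if R_c empty) *)
Definition pnum (X : finType) (d : nat) (r : X -> X -> 'I_d.+1) (a b c : 'I_d.+1)
  : nat :=
  match [pick mn : X * X | r mn.1 mn.2 == c] with
  | Some mn => pcount r a b mn.1 mn.2
  | None => 0%N
  end.

Definition valency (X : finType) (d : nat) (r : X -> X -> 'I_d.+1) (a : 'I_d.+1)
  : nat := pnum r a (trans r a) ord0.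

Definition cprod (X : finType) (d : nat) (r : X -> X -> 'I_d.+1) (a b : 'I_d.+1)
  : {set 'I_d.+1} := [set c | (0 < pnum r a b c)%N].

(* Matrices in M_X(F): rows/columns indexed by 'I_#|X| via enum_val. *)
Definition adjm (F : fieldType) (X : finType) (d : nat) (r : X -> X -> 'I_d.+1)
  (a : 'I_d.+1) : 'M[F]_#|X| :=
  \matrix_(i, j) (r (enum_val i) (enum_val j) == a)%:R.

Definition Estar (F : fieldType) (X : finType) (d : nat) (r : X -> X -> 'I_d.+1)
  (y : X) (a : 'I_d.+1) : 'M[F]_#|X| :=
  \matrix_(i, j) ((i == j) && (r y (enum_val i) == a))%:R.

Definition Jmx (F : fieldType) (X : finType) : 'M[F]_#|X| := const_mx 1.

From HB Require Import structures.
From mathcomp Require Import all_boot all_order all_algebra.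
Import GRing.Theory.
Local Open Scope ring_scope.

(* If every pair (p, q) with p in xR_i and q in xR_l lies in one relation R_n,
   then E_i^* A_m E_l^* is the all-ones block E_i^* J E_l^* when m = n and
   vanishes otherwise; the block is nonzero since xR_i and xR_l are nonempty.
   A pair (p, q) as above is joined by the path p -> x -> q of type (i', l),
   so R_{pq} always lies in R_{i'} R_l, which settles the case of a singleton
   complex product.  If k_i = 1 then xR_i = {p0}, and for q, q0 in xR_l the
   intersection number p_{i,n}^l with n = R_{p0 q0} is counted at (x, q0)
   and at (x, q): its witness at (x, q) must be p0, whence R_{p0 q} = R_n.
   The case k_l = 1 is symmetric. *)

Set Implicit Arguments.
Unset Strict Implicit.

Section DualIdempotents.

Variables (F : fieldType) (X : finType) (d : nat) (r : X -> X -> 'I_d.+1).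

Lemma Estar_diag y a :
  Estar F r y a = diag_mx (\row_k (r y (enum_val k) == a)%:R).
Proof.
apply/matrixP => i j; rewrite !mxE.
by case: (i =P j) => [-> | _]; rewrite ?mulr1n ?mulr0n.
Qed.

Lemma Estar_mul_mul_Estar y i l (M : 'M[F]_#|X|) a b :
  (Estar F r y i *m M *m Estar F r y l) a b =
  (r y (enum_val a) == i)%:R * M a b * (r y (enum_val b) == l)%:R.
Proof. by rewrite !Estar_diag mul_mx_diag mul_diag_mx !mxE. Qed.

Definition block_const x i l (n : 'I_d.+1) : Prop :=
  forall p q, r x p = i -> r x q = l -> r p q = n.

Lemma Estar_adjm_Estar_block x i l n m :
  block_const x i l n ->
  Estar F r x i *m adjm F r m *m Estar F r x l
    = (m == n)%:R *: (Estar F r x i *m Jmx F X *m Estar F r x l).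
Proof.
move=> const_n; apply/matrixP => a b.
rewrite [RHS]mxE !Estar_mul_mul_Estar !mxE mulr1.
case: (r x _ =P i) => [ha | _]; case: (r x _ =P l) => [hb | _];
  rewrite /= ?(mul0r, mulr0, mul1r, mulr1) //.
by rewrite (const_n _ _ ha hb) eq_sym.
Qed.

Lemma Estar_J_Estar_neq0 x i l :
  (exists p, r x p = i) -> (exists q, r x q = l) ->
  Estar F r x i *m Jmx F X *m Estar F r x l != 0.
Proof.
move=> [p hp] [q hq]; apply/eqP => /matrixP /(_ (enum_rank p) (enum_rank q)).
rewrite Estar_mul_mul_Estar !mxE !enum_rankK hp hq !eqxx /= mulr1 mul1r.
by move/eqP; rewrite oner_eq0.
Qed.

Lemma Estar_adjm_Estar_unique x i l n :
  (exists p, r x p = i) -> (exists q, r x q = l) -> block_const x i l n ->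
  (forall m, Estar F r x i *m adjm F r m *m Estar F r x l != 0 <-> m = n) /\
  Estar F r x i *m adjm F r n *m Estar F r x l
    = Estar F r x i *m Jmx F X *m Estar F r x l.
Proof.
move=> xRi xRl const_n; have blockE := Estar_adjm_Estar_block _ const_n.
split=> [m | ]; last by rewrite blockE eqxx scale1r.
rewrite blockE scaler_eq0 negb_or Estar_J_Estar_neq0 // andbT.
by case: (m =P n) => [-> | neq_mn] /=; rewrite ?oner_eq0 ?eqxx.
Qed.

End DualIdempotents.

Section Scheme.

Variables (X : finType) (d : nat) (r : X -> X -> 'I_d.+1).
Hypothesis r_scheme : is_scheme r.

Lemma trans_swap c e f : r f e = trans r c <-> r e f = c.
Proof.
have [_ _ _ trans_ex _] := r_scheme; rewrite /trans.
case: pickP => /= [c' /forallP /(_ e) /forallP /(_ f) /eqP rfe | no_trans].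
  by split=> /eqP; [rewrite rfe | rewrite -rfe] => /eqP.
exfalso; have [c' c'_trans] := trans_ex c; move: (no_trans c') => /negbT/negP; apply.
by apply/forallP => e'; apply/forallP => f'; apply/eqP; apply/eqP/eqP => /c'_trans.
Qed.

Lemma pnumE a b m n : pnum r a b (r m n) = pcount r a b m n.
Proof.
have [_ _ _ _ pcount_const] := r_scheme; rewrite /pnum.
case: pickP => [mn /eqP rmn | /(_ (m, n))]; last by rewrite eqxx.
exact: pcount_const rmn erefl.
Qed.

Lemma pcount_gt0P a b m n :
  reflect (exists2 l, r m l = a & r l n = b) (0 < pcount r a b m n)%N.
Proof.
rewrite /pcount card_gt0; apply: (iffP (set0Pn _)) => [[l] | [l rml rln]].
  by rewrite inE => /andP [/eqP rml /eqP rln]; exists l.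
by exists l; rewrite inE rml rln !eqxx.
Qed.

Lemma rel_diag x : r x x = ord0.
Proof. by have [_ _ diag _ _] := r_scheme; apply/diag. Qed.

Lemma neighbour_exists x a : exists p, r x p = a.
Proof.
have [_ rel_ex _ _ _] := r_scheme; have [e [f ref]] := rel_ex a.
have : (0 < pcount r a (trans r a) e e)%N.
  by apply/pcount_gt0P; exists f => //; apply/trans_swap.
by rewrite -pnumE rel_diag -(rel_diag x) pnumE => /pcount_gt0P [p rxp _]; exists p.
Qed.

Lemma valency1_uniq a x p q : valency r a = 1%N -> r x p = a -> r x q = a -> p = q.
Proof.
rewrite /valency -(rel_diag x) pnumE => /eqP/cards1P [p0 xRa] rxp rxq.
have inxRa z : r x z = a -> z \in [set p0].
  by move=> rxz; rewrite -xRa inE rxz eqxx /=; apply/eqP/trans_swap.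
by move: (inxRa p rxp) (inxRa q rxq); rewrite !inE => /eqP -> /eqP ->.
Qed.

Lemma rel_in_cprod a b p x q : r p x = a -> r x q = b -> r p q \in cprod r a b.
Proof. by move=> rpx rxq; rewrite inE pnumE; apply/pcount_gt0P; exists x. Qed.

Lemma block_const_cprod x i l j :
  cprod r (trans r i) l = [set j] -> block_const r x i l j.
Proof.
move=> cprod1 p q rxp rxq; apply/set1P; rewrite -cprod1.
by apply: rel_in_cprod rxq; apply/trans_swap.
Qed.

Lemma block_const_valency1_l x i l p0 q0 :
  valency r i = 1%N -> r x p0 = i -> r x q0 = l -> block_const r x i l (r p0 q0).
Proof.
move=> ki1 rxp0 rxq0 p q rxp rxq; rewrite -(valency1_uniq ki1 rxp0 rxp).
have : (0 < pcount r i (r p0 q0) x q0)%N by apply/pcount_gt0P; exists p0.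
rewrite -pnumE rxq0 -rxq pnumE => /pcount_gt0P [w rxw <-].
by rewrite (valency1_uniq ki1 rxp0 rxw).
Qed.

Lemma block_const_valency1_r x i l p0 q0 :
  valency r l = 1%N -> r x p0 = i -> r x q0 = l -> block_const r x i l (r p0 q0).
Proof.
move=> kl1 rxp0 rxq0 p q rxp rxq; rewrite -(valency1_uniq kl1 rxq0 rxq).
have : (0 < pcount r (r p0 q0) (trans r l) p0 x)%N.
  by apply/pcount_gt0P; exists q0 => //; apply/trans_swap.
have [/trans_swap rp0x /trans_swap rpx] := (rxp0, rxp).
rewrite -pnumE rp0x -rpx pnumE => /pcount_gt0P [w <- /trans_swap rxw].
by rewrite (valency1_uniq kl1 rxq0 rxw).
Qed.

End Scheme.

Unset Implicit Arguments.

Theorem lemma3p2 (X : finType) (d : nat) (r : X -> X -> 'I_d.+1)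
  (F : fieldType) (x : X) (i l : 'I_d.+1) :
  is_scheme r ->
  (forall j : 'I_d.+1,
     cprod r (trans r i) l = [set j] ->
     (forall m : 'I_d.+1,
        Estar F r x i *m adjm F r m *m Estar F r x l != 0 <-> m = j) /\
     Estar F r x i *m adjm F r j *m Estar F r x l
       = Estar F r x i *m Jmx F X *m Estar F r x l) /\
  (valency r i = 1%N \/ valency r l = 1%N ->
     exists n : 'I_d.+1,
       (forall m : 'I_d.+1,
          Estar F r x i *m adjm F r m *m Estar F r x l != 0 <-> m = n) /\
       Estar F r x i *m adjm F r n *m Estar F r x l
         = Estar F r x i *m Jmx F X *m Estar F r x l).
Proof.
move=> r_scheme; have xRi := neighbour_exists r_scheme x i.
have xRl := neighbour_exists r_scheme x l.
split=> [j cprod1 | kil1].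
  by apply: Estar_adjm_Estar_unique => //; apply: block_const_cprod.
have [[p0 rxp0] [q0 rxq0]] := (xRi, xRl).
exists (r p0 q0); apply: Estar_adjm_Estar_unique => //.
by case: kil1 => [ki1 | kl1];
  [apply: block_const_valency1_l | apply: block_const_valency1_r].
Qed.
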